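(* Let $R$ be a commutative ring with $\mathbb{Q}\subseteq R$, $\mathcal{A}$ a commutative unital $R$-algebra, and $\mathcal{E}$ a finitely generated projective $\mathcal{A}$-module with a symmetric, strongly nondegenerate, full $\mathcal{A}$-bilinear form $\langle\cdot,\cdot\rangle$. Let $r\ge2$ and $\mathsf{C}\in\mathcal{C}^r(\mathcal{E})$. Then for all $x_1,\dots,x_{r-1}\in\mathcal{E}$ and $a\in\mathcal{A}$: $$\mathsf{C}(x_1,\dots,x_{r-2},ax_{r-1})=a\,\mathsf{C}(x_1,\dots,x_{r-1})+\big(\sigma_{\mathsf{C}}(x_1,\dots,x_{r-2})a\big)\,x_{r-1}.$$
   Context: Strongly nondegenerate: $\mathcal{E}\to\operatorname{Hom}_{\mathcal{A}}(\mathcal{E},\mathcal{A})$ is an isomorphism. Full: every $a\in\mathcal{A}$ is a finite sum $\sum_i\langle x_i,y_i\rangle$. $\operatorname{Der}(\mathcal{A})$: $R$-linear derivations of $\mathcal{A}$. For $r\ge2$, $\mathcal{C}^r(\mathcal{E})$ is the set of $\mathsf{C}\in\operatorname{Hom}_R(\mathcal{E}^{\otimes_R(r-1)},\mathcal{E})$ admitting an $R$-multilinear symbol $\sigma_{\mathsf{C}}:\mathcal{E}^{\otimes(r-2)}\to\operatorname{Der}(\mathcal{A})$ (unique) with two properties: (1) $\sigma_{\mathsf{C}}(x_1,\dots,x_{r-2})\langle u,w\rangle=\langle\mathsf{C}(x_1,\dots,x_{r-2},u),w\rangle+\langle u,\mathsf{C}(x_1,\dots,x_{r-2},w)\rangle$;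 (2) for $r\ge3$ and $1\le i\le r-2$, $\langle\mathsf{C}(\dots,x_i,x_{i+1},\dots)+\mathsf{C}(\dots,x_{i+1},x_i,\dots),u\rangle=\sigma_{\mathsf{C}}(x_1,\dots,\widehat{x_i},\widehat{x_{i+1}},\dots,x_{r-1},u)\langle x_i,x_{i+1}\rangle$. For $r=2$, $\sigma_{\mathsf{C}}$ is a single derivation. *)

From HB Require Import structures.
From mathcomp Require Import all_boot all_order all_algebra.
Set Implicit Arguments. Unset Strict Implicit. Unset Printing Implicit Defensive.
Import GRing.Theory.
Local Open Scope ring_scope.

Definition contains_Q (R : comUnitRingType) : Prop :=
  forall n : nat, (n.+1)%:R \is a (@GRing.unit R).

Section Defs.
Variables (R : comUnitRingType) (A : comAlgType R) (E : lmodType A).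

Definition Alinear (F : lmodType A) (f : E -> F) : Prop :=
  forall (a : A) (x y : E), f (a *: x + y) = a *: f x + f y.

(* finitely generated projective: a direct summand of some free module A^n *)
Definition fg_projective : Prop :=
  exists (n : nat) (i : E -> 'rV[A]_n) (p : 'rV[A]_n -> E),
    Alinear i /\ (forall (a : A) (u v : 'rV[A]_n), p (a *: u + v) = a *: p u + p v)
    /\ (forall x, p (i x) = x).

Definition sym_bilinear (form : E -> E -> A) : Prop :=
  (forall y, Alinear (fun x : E => (form x y : A^o)))
  /\ (forall x, Alinear (fun y : E => (form x y : A^o)))
  /\ (forall x y, form x y = form y x).

(* strongly nondegenerate: x |-> <x,.> is a bijection E -> Hom_A(E,A) *)
Definition strongly_nondegenerate (form : E -> E -> A) : Prop :=
  (forall x, (forall y, form x y = 0) -> x = 0)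
  /\ (forall phi : E -> A^o, Alinear phi -> exists x, forall y, phi y = form x y).

Definition full_form (form : E -> E -> A) : Prop :=
  forall a : A, exists s : seq (E * E), a = \sum_(p <- s) form p.1 p.2.

Definition is_derivation (D : A -> A) : Prop :=
  (forall (k : R) (a b : A), D (k *: a + b) = k *: D a + D b)
  /\ (forall a b : A, D (a * b) = D a * b + a * D b).

Definition R_multilinear (N : nat) (f : seq E -> E) : Prop :=
  forall (s1 s2 : seq E), (size s1 + size s2).+1 = N ->
    forall (k : R) (x y : E),
      f (s1 ++ (k%:A *: x + y) :: s2)
      = k%:A *: f (s1 ++ x :: s2) + f (s1 ++ y :: s2).

(* sigma is a symbol of C in the sense of C^r(E); C is taken on lists of
   length r-1, sigma on lists of length r-2. *)
Definition is_symbol (form : E -> E -> A) (r : nat)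
    (C : seq E -> E) (sigma : seq E -> A -> A) : Prop :=
  (forall xs, size xs = r.-2 -> is_derivation (sigma xs))
  /\ (forall (s1 s2 : seq E), (size s1 + size s2).+1 = r.-2 ->
        forall (k : R) (x y : E) (a : A),
        sigma (s1 ++ (k%:A *: x + y) :: s2) a
        = k *: sigma (s1 ++ x :: s2) a + sigma (s1 ++ y :: s2) a)
  /\ (forall xs, size xs = r.-2 -> forall u w : E,
        sigma xs (form u w) = form (C (rcons xs u)) w + form u (C (rcons xs w)))
  (* property (2) (only non-vacuous when r >= 3) *)
  /\ (forall (s1 s2 : seq E) (x y u : E), (size s1 + size s2).+2 = r.-1 ->
        form (C (s1 ++ x :: y :: s2) + C (s1 ++ y :: x :: s2)) u
        = sigma (s1 ++ s2 ++ [:: u]) (form x y)).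

Definition in_Cr (form : E -> E -> A) (r : nat)
    (C : seq E -> E) (sigma : seq E -> A -> A) : Prop :=
  R_multilinear r.-1 C /\ is_symbol form r C sigma.

End Defs.

(* Pairing the left-hand side with an arbitrary w, compatibility of C with
   the form (property (1)) and the Leibniz rule for the derivation
   sigma(x_1, ..., x_(r-2)) compute <C(.., a x), w> as
   <a C(.., x) + (sigma a) x, w>; nondegeneracy of the form then identifies
   the two vectors. Only linearity of the form in its first argument and
   injectivity of x |-> <x, .> are needed. *)

From HB Require Import structures.
From mathcomp Require Import all_boot all_order all_algebra.
From mathcomp Require Import ring.
Set Implicit Arguments. Unset Strict Implicit. Unset Printing Implicit Defensive.
Import GRing.Theory.
Local Open Scope ring_scope.

Section LeftLinearForm.

Variables (R : comUnitRingType) (A : comAlgType R) (E : lmodType A).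
Variable form : E -> E -> A.
Hypothesis form_linear_l : forall y, Alinear (fun x : E => (form x y : A^o)).

Lemma formZDl (b : A) (u v w : E) :
  form (b *: u + v) w = b * form u w + form v w.
Proof. exact: form_linear_l. Qed.

Lemma formDl (u v w : E) : form (u + v) w = form u w + form v w.
Proof. by rewrite -[u in LHS]scale1r formZDl mul1r. Qed.

Lemma form0l (w : E) : form 0 w = 0.
Proof. by apply: (addIr (form 0 w)); rewrite add0r -formDl addr0. Qed.

Lemma formZl (b : A) (u w : E) : form (b *: u) w = b * form u w.
Proof. by rewrite -[b *: u]addr0 formZDl form0l addr0. Qed.

Lemma formBl (u v w : E) : form (u - v) w = form u w - form v w.
Proof. by rewrite formDl -scaleN1r formZl mulN1r. Qed.

Hypothesis form_nondeg : forall x, (forall y, form x y = 0) -> x = 0.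

Lemma form_eq_l (u v : E) : (forall w, form u w = form v w) -> u = v.
Proof.
by move=> uv; apply/eqP; rewrite -subr_eq0; apply/eqP/form_nondeg => w;
  rewrite formBl uv subrr.
Qed.

Lemma compatible_map_Leibniz (nabla : E -> E) (D : A -> A) :
  (forall a b, D (a * b) = D a * b + a * D b) ->
  (forall u w, D (form u w) = form (nabla u) w + form u (nabla w)) ->
  forall (a : A) (x : E), nabla (a *: x) = a *: nabla x + D a *: x.
Proof.
move=> DM compat a x; apply: form_eq_l => w.
have := compat (a *: x) w; rewrite !formZl DM compat => compat_ax.
rewrite formDl !formZl.
by apply: (addIr (a * form x (nabla w))); rewrite -compat_ax; ring.
Qed.

End LeftLinearForm.

Theorem mainTheorem10 (R : comUnitRingType) (A : comAlgType R) (E : lmodType A)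
    (form : E -> E -> A) (r : nat) (C : seq E -> E) (sigma : seq E -> A -> A) :
  contains_Q R ->
  fg_projective E ->
  sym_bilinear form ->
  strongly_nondegenerate form ->
  full_form form ->
  (2 <= r)%N ->
  in_Cr form r C sigma ->
  forall (xs : seq E) (x : E) (a : A), size xs = r.-2 ->
    C (rcons xs (a *: x)) = a *: C (rcons xs x) + sigma xs a *: x.
Proof.
move=> _ _ [lin_l _] [nondeg _] _ _ [_ [sigma_der [_ [compat _]]]] xs x a sz.
have [_ sigmaM] := sigma_der xs sz.
exact: (compatible_map_Leibniz lin_l nondeg (nabla := C \o rcons xs) sigmaM (compat xs sz)).
Qed.
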